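(* For every input word $u\in\{0,1,2\}^*$, the Berstel adder $\mathcal{B}$ outputs a binary word $\mathcal{B}(u)\cdot\mathcal{B}_{\downarrow}(u)\in\{0,1\}^*$ with \[ \mathrm{val}_{\mathcal{F}}(u)=\mathrm{val}_{\mathcal{F}}\big(\mathcal{B}(u)\cdot\mathcal{B}_{\downarrow}(u)\big). \]
   Context: Fibonacci numbers: $F_0=1$, $F_1=2$, $F_n=F_{n-1}+F_{n-2}$ for $n\ge2$. For a word $w=w_{k-1}\cdots w_0$ over $\{0,1,2\}$ (digits indexed from the right), $\mathrm{val}_{\mathcal{F}}(w)=\sum_{i=0}^{k-1}w_iF_i$, with $\mathrm{val}_{\mathcal F}(\varepsilon)=0$. A Mealy machine reads an input word from left to right starting in its initial state; each transition $p\xrightarrow{a/b}q$ reads letter $a$, outputs letter $b$ and moves to $q$. $M(u)$ is the concatenation of outputs, and $M_{\downarrow}(u)$ the extra output word of the state reached after reading $u$. The Berstel adder $\mathcal{B}$ has 10 states $000.0,\ 001.1,\ 001.2,\ 010.3,\ 010.4,\ 100.5,\ 100.6,\ 101.6,\ 101.7,\ 000.1$, initial state $000.0$, transitions: $000.0$: $0/0\to000.0$, $1/0\to001.2$, $2/0\to010.4$; $001.2$: $0/0\to010.3$, $1/0\to100.5$, $2/0\to101.7$; $010.4$: $0/0\to101.6$, $1/1\to000.0$, $2/1\to001.2$; $010.3$: $0/0\to100.5$, $1/0\to101.7$, $2/1\to000.1$; $100.5$: $0/1\to000.0$, $1/1\to001.2$, $2/1\to010.4$; $101.7$: $0/1\to010.3$,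 $1/1\to100.5$, $2/1\to101.7$; $101.6$: $0/1\to001.2$, $1/1\to010.4$, $2/1\to100.6$; $000.1$: $0/0\to001.1$, $1/0\to010.3$, $2/0\to100.5$; $100.6$: $0/1\to001.1$, $1/1\to010.3$, $2/1\to100.5$; $001.1$: $0/0\to001.2$, $1/0\to010.4$, $2/0\to100.6$. The extra output word of a state $xyz.j$ is $xyz$. *)

From mathcomp Require Import all_boot.
Set Implicit Arguments. Unset Strict Implicit. Unset Printing Implicit Defensive.

Fixpoint F (n : nat) : nat :=
  match n with
  | 0 => 1
  | 1 => 2
  | (m.+1 as p).+1 => F p + F m
  end.

(* A word w = w_{k-1} ... w_0 is the list [:: w_{k-1}; ...; w_0]
   (leftmost letter first); digit w_i has weight F i. *)
Fixpoint valF (w : seq nat) : nat :=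
  match w with
  | [::] => 0
  | a :: s => a * F (size s) + valF s
  end.

(* States of the Berstel adder, named after xyz.j. *)
Inductive bstate :=
  | s000_0 | s001_1 | s001_2 | s010_3 | s010_4
  | s100_5 | s100_6 | s101_6 | s101_7 | s000_1.

Definition binit : bstate := s000_0.

(* Transition function: state, input letter -> (output letter, next state).
   Letters outside {0,1,2} are mapped arbitrarily (they never occur under
   the theorem's hypothesis). *)
Definition bstep (q : bstate) (a : nat) : nat * bstate :=
  match q, a with
  | s000_0, 0 => (0, s000_0) | s000_0, 1 => (0, s001_2) | s000_0, _ => (0, s010_4)
  | s001_2, 0 => (0, s010_3) | s001_2, 1 => (0, s100_5) | s001_2, _ => (0, s101_7)
  | s010_4, 0 => (0, s101_6) | s010_4, 1 => (1, s000_0) | s010_4, _ => (1, s001_2)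
  | s010_3, 0 => (0, s100_5) | s010_3, 1 => (0, s101_7) | s010_3, _ => (1, s000_1)
  | s100_5, 0 => (1, s000_0) | s100_5, 1 => (1, s001_2) | s100_5, _ => (1, s010_4)
  | s101_7, 0 => (1, s010_3) | s101_7, 1 => (1, s100_5) | s101_7, _ => (1, s101_7)
  | s101_6, 0 => (1, s001_2) | s101_6, 1 => (1, s010_4) | s101_6, _ => (1, s100_6)
  | s000_1, 0 => (0, s001_1) | s000_1, 1 => (0, s010_3) | s000_1, _ => (0, s100_5)
  | s100_6, 0 => (1, s001_1) | s100_6, 1 => (1, s010_3) | s100_6, _ => (1, s100_5)
  | s001_1, 0 => (0, s001_2) | s001_1, 1 => (0, s010_4) | s001_1, _ => (0, s100_6)
  end.

Definition bfinal (q : bstate) : seq nat :=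
  match q with
  | s000_0 | s000_1 => [:: 0; 0; 0]
  | s001_1 | s001_2 => [:: 0; 0; 1]
  | s010_3 | s010_4 => [:: 0; 1; 0]
  | s100_5 | s100_6 => [:: 1; 0; 0]
  | s101_6 | s101_7 => [:: 1; 0; 1]
  end.

Fixpoint brun (q : bstate) (u : seq nat) : seq nat * bstate :=
  match u with
  | [::] => ([::], q)
  | a :: s => let (b, q') := bstep q a in
              let (w, r) := brun q' s in (b :: w, r)
  end.

Definition B_out (u : seq nat) : seq nat := (brun binit u).1.
Definition B_down (u : seq nat) : seq nat := bfinal (brun binit u).2.

From mathcomp Require Import all_boot.
From mathcomp Require Import zify.

(* Each state owes a value still to be written out: for state xyz.j with
   [n] letters left to read, this debt is [h * fib (n+1) + l * fib n] with
   [h = valF xyz] and a second state-dependent weight [l].  Every transition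
   preserves "input read + debt = output written + debt", the output letter
   sitting three places to the left of the input letter; once the input is
   exhausted the debt is exactly [valF xyz], the extra output. *)

Fixpoint fib (n : nat) : nat :=
  match n with 0 => 0 | 1 => 1 | (m.+1 as p).+1 => fib p + fib m end.

Lemma fibSS n : fib n.+2 = fib n.+1 + fib n.
Proof. by []. Qed.

Lemma F_fib n : F n = fib n.+2.
Proof.
suff : F n = fib n.+2 /\ F n.+1 = fib n.+3 by case.
by elim: n => [|n [IH1 IH2]] //; split; rewrite // -[F n.+2]/(F n.+1 + F n) IH1 IH2.
Qed.

Definition debt_hi (q : bstate) : nat :=
  match q with
  | s000_0 | s000_1 => 0 | s001_1 | s001_2 => 1 | s010_3 | s010_4 => 2
  | s100_5 | s100_6 => 3 | s101_6 | s101_7 => 4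
  end.

Definition debt_lo (q : bstate) : nat :=
  match q with
  | s000_0 | s001_1 => 0 | s000_1 | s001_2 | s010_3 => 1
  | s010_4 | s100_5 | s101_6 => 2 | s100_6 | s101_7 => 3
  end.

Definition debt (q : bstate) (n : nat) : nat :=
  debt_hi q * fib n.+1 + debt_lo q * fib n.

Lemma debt_init n : debt binit n = 0.
Proof. by rewrite /debt /= !mul0n. Qed.

Lemma debt0 q : debt q 0 = valF (bfinal q).
Proof. by case: q. Qed.

Lemma bstep_debt q a n : a <= 2 ->
  a * F n + debt q n.+1 = (bstep q a).1 * F (n + 3) + debt (bstep q a).2 n.
Proof.
have fib5 : fib (n + 3).+2 = 5 * fib n.+1 + 3 * fib n.
  by rewrite addn3 !fibSS; lia.
rewrite /debt !F_fib fib5 !fibSS.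
by case: a => [|[|[|a]]] // _; case: q => /=; lia.
Qed.

Lemma bstep_binary q a : (bstep q a).1 <= 1.
Proof. by case: q; case: a => [|[|[|a]]]. Qed.

Lemma size_bfinal q : size (bfinal q) = 3.
Proof. by case: q. Qed.

Lemma brun_cons q a s :
  brun q (a :: s) =
  ((bstep q a).1 :: (brun (bstep q a).2 s).1, (brun (bstep q a).2 s).2).
Proof. by rewrite /=; case: (bstep q a) => b q' /=; case: (brun q' s). Qed.

Lemma size_brun q s : size (brun q s).1 = size s.
Proof. by elim: s q => [|a s IH] q //; rewrite brun_cons /= IH. Qed.

Lemma brun_binary q s :
  all (fun b => b <= 1) ((brun q s).1 ++ bfinal (brun q s).2).
Proof.
elim: s q => [|a s IH] q; first by case: q.
by rewrite brun_cons /= bstep_binary IH.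
Qed.

Lemma brun_valF q s : all (fun a => a <= 2) s ->
  valF ((brun q s).1 ++ bfinal (brun q s).2) = valF s + debt q (size s).
Proof.
elim: s q => [|a s IH] q; first by rewrite debt0.
move=> /andP [Ha Hs].
rewrite brun_cons /= IH // size_cat size_brun size_bfinal.
by rewrite addnCA -bstep_debt // addnCA addnA.
Qed.

Theorem theorem2 (u : seq nat) :
  all (fun a => a <= 2) u ->
  all (fun b => b <= 1) (B_out u ++ B_down u) /\
  valF u = valF (B_out u ++ B_down u).
Proof.
move=> Hu; split; first exact: brun_binary.
by rewrite brun_valF // debt_init addn0.
Qed.
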